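(* Let $n$ be a positive integer and $N = n^2+n+1$. The equation $a^2+ab+b^2 = N$ has a solution in positive integers $(a,b)$ with $(a,b) \notin \{(n,1),(1,n)\}$ if and only if $N$ is neither a prime nor three times a prime. *)

From mathcomp Require Import all_boot.

From Stdlib Require Import ZArith Lia.
From mathcomp Require Import all_boot zify.

(* If a^2 + ab + b^2 = N, then (bn - a)(bn + a + b) = (b^2 - 1) N, and for
   (a, b) other than (n, 1), (1, n) the modulus N divides neither factor, so N
   is not prime.  If N = 3p, then 3 divides both factors (their sum b(2n + 1)
   is a multiple of 3, and 9 never divides N), so p divides a factor which is
   then a multiple of N.

   Conversely, work in Z[w], w^2 + w + 1 = 0, where N is the norm of n - w.
   A descent on r mod d shows that every positive divisor d of r^2 + r + 1 is
   the norm of a divisor of r - w; so N = dm with d, m not in {1, 3} gives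
   n - w = xy with norms d and m.  The product (conj x) y also has norm N;
   it lies on no axis (N is not a square), hence is a unit times a - bw with
   a, b > 0.  If (a, b) were (n, 1) or (1, n), then x or y would be associate
   to its own conjugate and would divide both n - w and its conjugate
   n + 1 + w, hence 1 + 2w, of norm 3. *)

Section Eisenstein.
Local Open Scope Z_scope.

(* [Eis p q] is the Eisenstein integer p + q w; [econj] is complex conjugation. *)
Record eisenstein := Eis { re : Z; om : Z }.

Definition eadd x y := Eis (re x + re y) (om x + om y).
Definition esub x y := Eis (re x - re y) (om x - om y).
Definition emul x y :=
  Eis (re x * re y - om x * om y) (re x * om y + om x * re y - om x * om y).
Definition econj x := Eis (re x - om x) (- om x).
Definition enorm x := re x * re x - re x * om x + om x * om x.

Lemma eis_ext x y : re x = re y -> om x = om y -> x = y.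
Proof. by case: x y => [p q] [s t] /= -> ->. Qed.

Lemma emulC x y : emul x y = emul y x.
Proof. by apply: eis_ext => /=; ring. Qed.

Lemma emulA x y z : emul x (emul y z) = emul (emul x y) z.
Proof. by apply: eis_ext => /=; ring. Qed.

Lemma emulDr x y z : emul x (eadd y z) = eadd (emul x y) (emul x z).
Proof. by apply: eis_ext => /=; ring. Qed.

Lemma emulBr x y z : emul x (esub y z) = esub (emul x y) (emul x z).
Proof. by apply: eis_ext => /=; ring. Qed.

Lemma emul1 x : emul (Eis 1 0) x = x.
Proof. by case: x => p q; apply: eis_ext; cbn [re om emul]; ring. Qed.

Lemma econjK x : econj (econj x) = x.
Proof. by apply: eis_ext => /=; ring. Qed.

Lemma econjM x y : econj (emul x y) = emul (econj x) (econj y).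
Proof. by apply: eis_ext => /=; ring. Qed.

Lemma emul_conj x : emul x (econj x) = Eis (enorm x) 0.
Proof. by apply: eis_ext => /=; rewrite /enorm; ring. Qed.

Lemma enormM x y : enorm (emul x y) = enorm x * enorm y.
Proof. by rewrite /enorm /=; ring. Qed.

Lemma enorm_conj x : enorm (econj x) = enorm x.
Proof. by rewrite /enorm /=; ring. Qed.

Lemma enorm_ge0 x : 0 <= enorm x.
Proof. rewrite /enorm; nia. Qed.

Lemma enorm_eq0 x : enorm x = 0 -> x = Eis 0 0.
Proof. by rewrite /enorm => nx; apply: eis_ext => /=; nia. Qed.

Lemma emulI x y z : enorm x <> 0 -> emul x y = emul x z -> y = z.
Proof.
  move=> nx_neq0 exy_xz.
  have : emul x (esub y z) = Eis 0 0.
    by rewrite emulBr exy_xz; apply: eis_ext => /=; ring.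
  move=> /(congr1 enorm); rewrite enormM => /Z.mul_eq_0 [//|/enorm_eq0 yz0].
  by apply: eis_ext; move: (congr1 re yz0) (congr1 om yz0) => /=; lia.
Qed.

Lemma divisor_is_norm d r : 0 < d -> (d | r * r + r + 1) ->
  exists x y, enorm x = d /\ emul x y = Eis r (-1).
Proof.
  move=> d_gt0; have d_ge0 := Z.lt_le_incl _ _ d_gt0; move: d d_ge0 r d_gt0.
  apply: Z_lt_induction => d IH r d_gt0 [c def_c].
  have [->|d_gt1] : d = 1 \/ 1 < d by lia.
    by exists (Eis 1 0), (Eis r (-1)); split; [|exact: emul1].
  have def_r : r = d * (r / d) + r mod d := Z.div_mod r d ltac:(lia).
  have r0_bound : 0 <= r mod d < d := Z.mod_pos_bound r d d_gt0.
  move: (r / d) (r mod d) def_r r0_bound => k r0 def_r r0_bound.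
  pose e := c - d * k * k - 2 * k * r0 - k.
  have def_e : r0 * r0 + r0 + 1 = d * e by rewrite /e; subst r; nia.
  have e_bound : 0 < e < d by nia.
  have [x [y [norm_x xy_eq]]] : exists x y, enorm x = e /\ emul x y = Eis r0 (-1).
    by apply: IH; [lia | lia | exists d; lia].
  have norm_y : enorm y = d.
    have := enormM x y; rewrite xy_eq norm_x /enorm /=; nia.
  (* r - w = (r0 - w) + k d = y x + k y (econj y). *)
  exists y, (eadd x (emul (econj y) (Eis k 0))); split => //.
  rewrite emulDr emulA emul_conj (emulC y x) xy_eq norm_y.
  by apply: eis_ext; cbn [re om eadd emul]; lia.
Qed.

Lemma Zmul_eq3 a b : 0 <= a -> 0 <= b -> a * b = 3 -> a = 1 \/ a = 3.
Proof.
  move=> a_ge0 b_ge0 ab3.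
  have b_gt0 : 0 < b by have [b0|] := Z.eq_dec b 0; [rewrite b0 in ab3 | ]; lia.
  have : a = 0 \/ a = 1 \/ a = 2 \/ a = 3 by nia.
  by case=> [|[|[|]]] a_val; subst a; lia.
Qed.

(* x divides r - w and, through [econj x = u x], also its conjugate r + 1 + w,
   hence their difference 1 + 2w, whose norm is 3. *)
Lemma selfconj_divisor_norm x y u r : emul x y = Eis r (-1) -> econj x = emul u x ->
  enorm x = 1 \/ enorm x = 3.
Proof.
  move=> xy_eq conj_x.
  have conj_xy : emul x (emul u (econj y)) = Eis (r + 1) 1.
    rewrite emulA (emulC x u) -conj_x -econjM xy_eq.
    by apply: eis_ext => /=; ring.
  set w := esub (emul u (econj y)) y.
  have xw_eq : emul x w = Eis 1 2.
    by rewrite emulBr conj_xy xy_eq; apply: eis_ext => /=; ring.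
  have norm3 : enorm x * enorm w = 3 by rewrite -enormM xw_eq.
  exact: Zmul_eq3 (enorm_ge0 x) (enorm_ge0 w) norm3.
Qed.

Lemma square_neq_cyclo3 n z : 0 < n -> z * z <> n * n + n + 1.
Proof.
  move=> n_gt0; rewrite -Z.abs_square.
  have := Z.abs_nonneg z; move: (Z.abs z) => w w_ge0.
  by have [w_le|w_gt] := Z.le_gt_cases w n; nia.
Qed.

(* Off the three axes Z, Zw and Z(1 + w), where norms are squares, one of the
   six units rotates x into the open sector {a - b w | a, b > 0}. *)
Lemma associate_in_sector x : (forall z, enorm x <> z * z) ->
  exists u a b, [/\ enorm u = 1, 0 < a, 0 < b & x = emul u (Eis a (- b))].
Proof.
  case: x => p q; rewrite /enorm /= => not_sq.
  have p_neq0 : p <> 0 by move=> p0; apply: (not_sq q); rewrite p0; ring.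
  have q_neq0 : q <> 0 by move=> q0; apply: (not_sq p); rewrite q0; ring.
  have p_neq_q : p <> q by move=> pq; apply: (not_sq p); rewrite pq; ring.
  have : (p < 0 /\ q < 0 /\ p < q) \/ (p < 0 /\ q < 0 /\ q < p) \/ (p < 0 < q) \/
         (q < 0 < p) \/ (0 < p /\ 0 < q /\ p < q) \/ (0 < p /\ 0 < q /\ q < p) by lia.
  case=> [sector|[sector|[sector|[sector|[sector|sector]]]]];
    [ exists (Eis (-1) (-1)), (- q), (q - p) | exists (Eis 0 (-1)), (p - q), (- p)
    | exists (Eis (-1) 0), (- p), q | exists (Eis 1 0), p, (- q)
    | exists (Eis 0 1), (q - p), p | exists (Eis 1 1), q, (p - q) ];
    by split; try lia; [rewrite /enorm | apply: eis_ext]; cbn [re om emul]; ring.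
Qed.

Lemma nontrivial_rep_of_factorization n d m : 0 < n -> 0 < d -> d * m = n * n + n + 1 ->
  d <> 1 -> d <> 3 -> m <> 1 -> m <> 3 ->
  exists a b, [/\ 0 < a, 0 < b, a * a + a * b + b * b = n * n + n + 1,
                  ~ (a = n /\ b = 1) & ~ (a = 1 /\ b = n)].
Proof.
  move=> n_gt0 d_gt0 dm_eq d_neq1 d_neq3 m_neq1 m_neq3.
  have d_dvd : (d | n * n + n + 1) by exists m; lia.
  have [x [y [norm_x xy_eq]]] := divisor_is_norm d n d_gt0 d_dvd.
  have norm_y : enorm y = m.
    have := enormM x y; rewrite xy_eq norm_x /enorm /=; nia.
  have norm_xy : enorm (emul (econj x) y) = n * n + n + 1.
    by rewrite enormM enorm_conj norm_x norm_y.
  have not_square z : enorm (emul (econj x) y) <> z * z.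
    by rewrite norm_xy; apply/nesym/square_neq_cyclo3.
  have [u [a [b [norm_u a_gt0 b_gt0 def_xy]]]] := associate_in_sector _ not_square.
  exists a, b; split => //.
  - by rewrite -norm_xy def_xy enormM norm_u /enorm; cbn [re om]; ring.
  - case=> a_eq b_eq; subst a b.
    have conj_x : econj x = emul u x.
      apply: (emulI y); first by rewrite norm_y; nia.
      by rewrite !(emulC y) def_xy -xy_eq emulA.
    by have := selfconj_divisor_norm x y u n xy_eq conj_x; lia.
  - case=> a_eq b_eq; subst a b.
    pose v := emul u (econj (Eis 1 1)).
    have y_eq : y = emul v (econj y).
      apply: (emulI (econj x)); first by rewrite enorm_conj norm_x; lia.
      rewrite def_xy.
      (* 1 - n w is the conjugate of (1 + w)(n - w). *)
      have -> : Eis 1 (- n) = econj (emul (Eis 1 1) (emul x y)).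
        by rewrite xy_eq; apply: eis_ext; cbn [re om emul econj]; ring.
      by apply: eis_ext; cbn [re om emul econj v]; ring.
    have conj_y : econj y = emul (econj v) y by rewrite {1}y_eq econjM econjK.
    rewrite emulC in xy_eq.
    by have := selfconj_divisor_norm y x (econj v) n xy_eq conj_y; lia.
Qed.

End Eisenstein.

Definition cyclo3 (n : nat) := n ^ 2 + n + 1.

Lemma dvd3_cyclo3 n : 3 %| cyclo3 n -> 3 %| n.*2.+1.
Proof.
  move=> /dvdnP [k def_k].
  have : 3 %| n.*2.+1 * n.*2.+1.
    by apply/dvdnP; exists (4 * k - 1); rewrite /cyclo3 in def_k; nia.
  by rewrite Euclid_dvdM // orbb.
Qed.

Lemma not_dvd9_cyclo3 n : ~~ (9 %| cyclo3 n).
Proof.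
  apply/negP => dvd9.
  have /dvd3_cyclo3 /dvdnP [j def_j] : 3 %| cyclo3 n by apply: dvdn_trans dvd9.
  move: dvd9 => /dvdnP [k def_k]; rewrite /cyclo3 in def_k; lia.
Qed.

Lemma dvd_3prime_mul p x y : prime p -> p != 3 -> 3 %| x + y -> 3 * p %| x * y ->
  (3 * p %| x) || (3 * p %| y).
Proof.
  move=> p_prime p_neq3 dvd3_sum dvd_xy.
  have dvd3_xy : 3 %| x * y := dvdn_trans (dvdn_mulr p (dvdnn 3)) dvd_xy.
  have /andP [dvd3_x dvd3_y] : (3 %| x) && (3 %| y).
    move: dvd3_xy; rewrite Euclid_dvdM // => /orP [dvd3_x | dvd3_y].
    - by rewrite dvd3_x -(dvdn_addr y dvd3_x).
    - by rewrite dvd3_y andbT -(dvdn_addl x dvd3_y).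
  have cop3p : coprime 3 p by rewrite prime_coprime // dvdn_prime2 // eq_sym.
  have : p %| x * y := dvdn_trans (dvdn_mull 3 (dvdnn p)) dvd_xy.
  by rewrite Euclid_dvdM // !Gauss_dvd // dvd3_x dvd3_y.
Qed.

Lemma exists_prime_dvd_neq3 N : 1 < N -> N != 3 -> ~~ (9 %| N) ->
  exists2 p, prime p & (p != 3) && (p %| N).
Proof.
  move=> N_gt1 N_neq3 N_ndvd9.
  have [/dvdnP [m def_N]|N_ndvd3] := boolP (3 %| N).
    have m_gt1 : 1 < m by lia.
    exists (pdiv m); first exact: pdiv_prime.
    rewrite def_N dvdn_mulr ?pdiv_dvd // andbT; apply: contraNneq N_ndvd9 => pdiv3.
    by rewrite def_N (_ : 9 = 3 * 3) // dvdn_pmul2r // -pdiv3 pdiv_dvd.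
  exists (pdiv N); first exact: pdiv_prime.
  by rewrite pdiv_dvd andbT; apply: contraNneq N_ndvd3 => <-; rewrite pdiv_dvd.
Qed.

Lemma factor_avoiding_1_3 N : 1 < N -> ~ prime N -> ~ (exists p, prime p /\ N = 3 * p) ->
  ~~ (9 %| N) -> exists d m, [/\ d * m = N, 1 < d, 1 < m, d != 3 & m != 3].
Proof.
  move=> N_gt1 N_nprime N_n3prime N_ndvd9.
  have N_neq3 : N != 3 by apply: contra_notN N_nprime => /eqP ->.
  have [p p_prime /andP [p_neq3 /dvdnP [m def_N]]] := exists_prime_dvd_neq3 N N_gt1 N_neq3 N_ndvd9.
  exists p, m; split => //; first by rewrite def_N mulnC.
  - exact: prime_gt1.
  - by case: m def_N => [|[|m]] def_N //; [lia | move: N_nprime; rewrite def_N mul1n].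
  - by apply/eqP => m3; apply: N_n3prime; exists p; rewrite def_N m3 mulnC.
Qed.

Section NontrivialRepresentation.

Variables n a b : nat.
Hypotheses (a_gt0 : 0 < a) (b_gt0 : 0 < b) (rep : a ^ 2 + a * b + b ^ 2 = cyclo3 n).

Lemma rep_le : a <= n /\ b <= n.
Proof. by move: rep; rewrite /cyclo3; split; nia. Qed.

Lemma rep_le_mul : a <= b * n.
Proof. by have [a_le _] := rep_le; rewrite (leq_trans a_le) ?leq_pmull. Qed.

Lemma rep_factors_sum : (b * n - a) + (b * n + a + b) = b * n.*2.+1.
Proof. by have := rep_le_mul; nia. Qed.

Lemma rep_factors_mul : (b * n - a) * (b * n + a + b) + cyclo3 n = b ^ 2 * cyclo3 n.
Proof. by have := rep_le_mul; rewrite -{1}rep /cyclo3; nia. Qed.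

Lemma cyclo3_dvd_rep_factors : cyclo3 n %| (b * n - a) * (b * n + a + b).
Proof.
  by have := dvdn_mull (b ^ 2) (dvdnn (cyclo3 n)); rewrite -rep_factors_mul dvdn_addl.
Qed.

Lemma rep_first_factor_eq0 : b * n - a = 0 -> (a, b) = (n, 1).
Proof.
  move=> x0; have [a_le _] := rep_le.
  have b1 : b = 1 by nia.
  have a_n : a = n by subst b; lia.
  by rewrite a_n b1.
Qed.

Lemma rep_second_factor_eq : b * n + a + b = cyclo3 n -> (a, b) = (1, n).
Proof.
  move=> y_eq; have [_ b_le] := rep_le; have a_le := rep_le_mul.
  have x_eq : b * n - a + 1 = b ^ 2.
    apply/eqP; rewrite -(eqn_pmul2r (_ : 0 < cyclo3 n)) ?addn_gt0 ?orbT //.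
    by rewrite mulnDl mul1n -rep_factors_mul y_eq.
  rewrite /cyclo3 in y_eq.
  have [c def_n] : exists c, n = b + c by exists (n - b); rewrite subnKC.
  have c0 : c = 0 by move: a_le x_eq y_eq; rewrite def_n; nia.
  have a1 : a = 1 by move: y_eq; rewrite def_n c0 addn0 -mulnn; lia.
  by rewrite a1 def_n c0 addn0.
Qed.

Hypothesis nontrivial : ~ ((a, b) = (n, 1) \/ (a, b) = (1, n)).

Lemma cyclo3_ndvd_rep_factors :
  ~~ (cyclo3 n %| b * n - a) /\ ~~ (cyclo3 n %| b * n + a + b).
Proof.
  have [a_le b_le] := rep_le; have bn_le : b * n <= n ^ 2 by rewrite -mulnn leq_mul.
  split; apply/negP.
  - have [/rep_first_factor_eq0 triv|x_gt0] := posnP (b * n - a).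
      by move=> _; apply: nontrivial; left.
    by move=> /(dvdn_leq x_gt0); rewrite /cyclo3; lia.
  - move=> dvd_y; apply: nontrivial; right; apply: rep_second_factor_eq.
    have N_le : cyclo3 n <= b * n + a + b by apply: dvdn_leq dvd_y; lia.
    have : cyclo3 n %| b * n + a + b - cyclo3 n by rewrite dvdn_sub.
    have [|diff_gt0 /(dvdn_leq diff_gt0)] := posnP (b * n + a + b - cyclo3 n);
      rewrite /cyclo3 in N_le *; lia.
Qed.

Lemma cyclo3_composite_of_rep :
  ~ prime (cyclo3 n) /\ ~ (exists p, prime p /\ cyclo3 n = 3 * p).
Proof.
  have dvd_xy := cyclo3_dvd_rep_factors.
  have [ndvd_x ndvd_y] := cyclo3_ndvd_rep_factors.
  split => [N_prime | [p [p_prime N_eq]]].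
    by move: dvd_xy; rewrite Euclid_dvdM // (negbTE ndvd_x) (negbTE ndvd_y).
  have p_neq3 : p != 3.
    by apply: contraNneq (not_dvd9_cyclo3 n) => p3; rewrite N_eq p3.
  have dvd3_sum : 3 %| (b * n - a) + (b * n + a + b).
    by rewrite rep_factors_sum dvdn_mull // dvd3_cyclo3 // N_eq dvdn_mulr.
  move: dvd_xy; rewrite N_eq => /(dvd_3prime_mul p _ _ p_prime p_neq3 dvd3_sum).
  by rewrite -N_eq (negbTE ndvd_x) (negbTE ndvd_y).
Qed.

End NontrivialRepresentation.

Lemma rep_of_cyclo3_composite n : 0 < n -> ~ prime (cyclo3 n) ->
  ~ (exists p, prime p /\ cyclo3 n = 3 * p) ->
  exists a b, [/\ 0 < a, 0 < b, a ^ 2 + a * b + b ^ 2 = cyclo3 n &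
                 ~ ((a, b) = (n, 1) \/ (a, b) = (1, n))].
Proof.
  move=> n_gt0 N_nprime N_n3prime.
  have N_gt1 : 1 < cyclo3 n by rewrite /cyclo3; nia.
  have [d [m [dm_eq d_gt1 m_gt1 /eqP d_neq3 /eqP m_neq3]]] :=
    factor_avoiding_1_3 _ N_gt1 N_nprime N_n3prime (not_dvd9_cyclo3 n).
  rewrite /cyclo3 in dm_eq *.
  have [a [b [a_gt0 b_gt0 rep not_n1 not_1n]]] :=
    nontrivial_rep_of_factorization (Z.of_nat n) (Z.of_nat d) (Z.of_nat m)
      ltac:(lia) ltac:(lia) ltac:(nia) ltac:(lia) ltac:(lia) ltac:(lia) ltac:(lia).
  exists (Z.to_nat a), (Z.to_nat b); split; try lia.
  by case=> [[a_n b_1] | [a_1 b_n]]; [apply: not_n1 | apply: not_1n]; lia.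
Qed.

Theorem theorem4 (n : nat) (hn : 0 < n) :
  let N := n ^ 2 + n + 1 in
  (exists a b : nat,
      [/\ 0 < a, 0 < b, a ^ 2 + a * b + b ^ 2 = N &
          ~ ((a, b) = (n, 1) \/ (a, b) = (1, n))])
  <-> (~ prime N /\ ~ (exists p, prime p /\ N = 3 * p)).
Proof.
  split => [[a [b [a_gt0 b_gt0 rep nontrivial]]] | [N_nprime N_n3prime]].
  - exact: cyclo3_composite_of_rep a_gt0 b_gt0 rep nontrivial.
  - exact: rep_of_cyclo3_composite.
Qed.
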